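(* Let $p\equiv 3\pmod 4$ be a prime and $t\in\mathbb{F}_p$. The equation $y^2=x^3-(t^2+1)x$ over $\mathbb{F}_p$ defines a supersingular elliptic curve $E_t/\mathbb{F}_p$, and the point $(-1,t)$ is not divisible by $2$ in $E_t(\mathbb{F}_p)$, i.e. there is no $Q\in E_t(\mathbb{F}_p)$ with $2Q=(-1,t)$. *)

(* Short Weierstrass elliptic curves y^2 = x^3 + a x + b
   over a field F (characteristic assumed different from 2 where relevant),
   points as option (F * F) with None = point at infinity O. *)
From HB Require Import structures.
From mathcomp Require Import all_boot all_order all_algebra.
Set Implicit Arguments. Unset Strict Implicit. Unset Printing Implicit Defensive.
Import Order.TTheory GRing.Theory Num.Theory.
Local Open Scope ring_scope.

Section EC.
Variable F : fieldType.

Definition is_elliptic (a b : F) : Prop := 4%:R * a ^+ 3 + 27%:R * b ^+ 2 != 0.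

Definition on_curve (a b : F) (P : option (F * F)) : bool :=
  match P with
  | None => true
  | Some (x, y) => y ^+ 2 == x ^+ 3 + a * x + b
  end.

Definition ec_add (a b : F) (P Q : option (F * F)) : option (F * F) :=
  match P, Q with
  | None, _ => Q
  | _, None => P
  | Some (x1, y1), Some (x2, y2) =>
      if x1 == x2 then
        if y1 + y2 == 0 then None
        else let l := (3%:R * x1 ^+ 2 + a) / (2%:R * y1) in
             let x3 := l ^+ 2 - x1 - x2 in
             Some (x3, l * (x1 - x3) - y1)
      else let l := (y2 - y1) / (x2 - x1) in
           let x3 := l ^+ 2 - x1 - x2 in
           Some (x3, l * (x1 - x3) - y1)
  end.
End EC.

Definition npoints (p : nat) (a b : 'F_p) : nat :=
  #|[set P : option ('F_p * 'F_p) | on_curve a b P]|.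

(* Supersingularity over the prime field F_p: the trace of Frobenius
   a_p = p + 1 - #E(F_p) is divisible by p (equivalently E[p](Fpbar) = 0). *)
Definition supersingular_Fp (p : nat) (a b : 'F_p) : Prop :=
  (p%:Z %| (p%:Z + 1 - (npoints a b)%:Z))%Z.

(* Since #F_p = 3 mod 4, Fermat's little theorem shows that -1 is not a square
   in F_p.  Hence a = -(t^2 + 1) is nonzero and the curve is nonsingular.
   Moreover, for c <> 0 exactly one of c, -c is a square, so c and -c together
   always have exactly two square roots; as x^3 + a x is an odd function,
   the affine points of y^2 = x^3 + a x number exactly p, so #E(F_p) = p + 1.
   Finally, on y^2 = x^3 + a x the x-coordinate of 2(x, y) is the square
   ((x^2 - a) / 2y)^2, so it cannot be -1. *)

From mathcomp Require Import all_boot all_algebra.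
From mathcomp Require Import fingroup cyclic finfield.
From mathcomp Require Import ring zify.
Set Implicit Arguments. Unset Strict Implicit. Unset Printing Implicit Defensive.
Import GRing.Theory FinRing.Theory.
Local Open Scope ring_scope.

Lemma natr_card_finField (F : finFieldType) : #|F|%:R = 0 :> F.
Proof. by rewrite -zmodXgE -cardsT expg_cardG ?inE. Qed.

Lemma finField_two_neq0 (F : finFieldType) : odd #|F| -> 2%:R != 0 :> F.
Proof.
apply: contraTneq => two0.
have pchar2 : 2%N \in [pchar F] by rewrite inE /= two0 eqxx.
by rewrite -dvdn2 (dvdn_pcharf pchar2) natr_card_finField.
Qed.

Lemma sqrf_neqN1 (F : finFieldType) (s : F) : (#|F| %% 4 = 3)%N -> s ^+ 2 != -1.
Proof.
move=> cardF3; set k := (#|F| %/ 4)%N.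
have cardF : #|F| = (2 * (2 * k + 1)).+1 by lia.
have two_neq0 : 2%:R != 0 :> F by apply: finField_two_neq0; rewrite cardF /= oddM.
apply/eqP => sqr_s.
have s_neq0 : s != 0.
  by apply: contra_eq_neq sqr_s => ->; rewrite expr0n eq_sym oppr_eq0 oner_eq0.
have := expf_card s; rewrite cardF exprS exprM sqr_s -signr_odd oddD oddM /=.
rewrite expr1 mulrN1 => Ns_eq_s.
have /eqP : 2%:R * s = 0 by rewrite mulr_natl mulr2n -{1}Ns_eq_s addNr.
by rewrite mulf_eq0 (negPf two_neq0) (negPf s_neq0).
Qed.

Lemma sum_card_fibers (T U : finType) (f : T -> U) :
  (\sum_(u : U) #|[set x | f x == u]|)%N = #|T|.
Proof.
rewrite -sum1_card (partition_big f predT) //=.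
by apply: eq_bigr => u _; rewrite -sum1_card; apply: eq_bigl => x; rewrite inE.
Qed.

Section SquareRoots.
Variable F : finFieldType.

Definition sqrts (c : F) : {set F} := [set y | y ^+ 2 == c].

Lemma sqrts_sqr (s : F) : sqrts (s ^+ 2) = [set s; - s].
Proof. by apply/setP => y; rewrite !inE eqf_sqr. Qed.

Lemma card_sqrts_sqr (s : F) : #|sqrts (s ^+ 2)| = (s != - s).+1.
Proof. by rewrite sqrts_sqr cards2. Qed.

Lemma card_sqrts0 : #|sqrts 0| = 1%N.
Proof. by have := card_sqrts_sqr 0; rewrite expr0n oppr0 eqxx. Qed.

Lemma card_sqrts_le2 (c : F) : (#|sqrts c| <= 2)%N.
Proof.
have [-> | [s]] := set_0Vmem (sqrts c); first by rewrite cards0.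
by rewrite inE => /eqP <-; rewrite (card_sqrts_sqr s); case: (s != - s).
Qed.

Lemma sum_card_sqrts : (\sum_(c : F) #|sqrts c|)%N = #|F|.
Proof. exact: sum_card_fibers. Qed.

Hypothesis sqr_neqN1 : forall s : F, s ^+ 2 != -1.

Lemma card_sqrtsN_le2 (c : F) : (#|sqrts c| + #|sqrts (- c)| <= 2)%N.
Proof.
have [-> | [s]] := set_0Vmem (sqrts c); first by rewrite cards0 card_sqrts_le2.
rewrite inE => /eqP <-.
have [-> | [r]] := set_0Vmem (sqrts (- s ^+ 2)); first by rewrite cards0 addn0 card_sqrts_le2.
rewrite inE => /eqP sqr_r.
have [-> | s_neq0] := eqVneq s 0; first by rewrite expr0n oppr0 card_sqrts0.
have := sqr_neqN1 (r / s).
by rewrite expr_div_n sqr_r mulNr divff ?eqxx ?expf_neq0.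
Qed.

Lemma card_sqrtsN (c : F) : (#|sqrts c| + #|sqrts (- c)| = 2)%N.
Proof.
(* Summed over all c, the left-hand sides count every element of F twice. *)
have sum2 : (\sum_(c : F) (#|sqrts c| + #|sqrts (- c)|) = \sum_(c : F) 2)%N.
  have sumN : (\sum_(c : F) #|sqrts (- c)| = \sum_(c : F) #|sqrts c|)%N.
    by rewrite [RHS](reindex_inj oppr_inj).
  by rewrite big_split /= sumN sum_card_sqrts sum_nat_const muln2 addnn.
have /leqif_sum[_] : forall c : F, true ->
    (#|sqrts c| + #|sqrts (- c)| <= 2 ?= iff (#|sqrts c| + #|sqrts (- c)| == 2))%N.
  by move=> d _; apply/leqif_eq/card_sqrtsN_le2.
by rewrite sum2 eqxx => /esym/forallP/(_ c)/eqP.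
Qed.

Lemma sum_card_sqrts_odd (f : F -> F) : (forall x, f (- x) = - f x) ->
  (\sum_(x : F) #|sqrts (f x)|)%N = #|F|.
Proof.
move=> f_odd; set S := (\sum_(x : F) _)%N.
have sumN : S = (\sum_(x : F) #|sqrts (- f x)|)%N.
  by rewrite /S (reindex_inj oppr_inj); apply: eq_bigr => x _; rewrite f_odd.
suff : (S + S = #|F| + #|F|)%N by lia.
rewrite {2}sumN -big_split /= (eq_bigr (fun=> 2%N)) => [|x _]; last exact: card_sqrtsN.
by rewrite sum_nat_const muln2 addnn.
Qed.

End SquareRoots.

Lemma card_on_curve (F : finFieldType) (a b : F) :
  #|[set P | on_curve a b P]| = (\sum_(x : F) #|sqrts (x ^+ 3 + a * x + b)%R|)%N.+1.
Proof.
set affine := [set xy | on_curve a b (Some xy)].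
have -> : [set P | on_curve a b P] = None |: (Some @: affine).
  by apply/setP => [[xy|]]; rewrite !inE //= (mem_imset _ _ Some_inj) inE.
have None_notin : None \notin Some @: affine by apply/imsetP => -[].
rewrite cardsU1 None_notin card_imset; last exact: Some_inj.
rewrite add1n; congr _.+1.
transitivity (\sum_(x : F) \sum_(y : F | (y ^+ 2 == x ^+ 3 + a * x + b)%R) 1)%N; last first.
  by apply: eq_bigr => x _; rewrite -sum1_card; apply: eq_bigl => y; rewrite inE.
by rewrite pair_big_dep -sum1_card; apply: eq_bigl => -[x y]; rewrite !inE.
Qed.

Lemma ec_double_x_sqr (F : fieldType) (a : F) (Q : option (F * F)) (u v : F) :
  on_curve a 0 Q -> ec_add a 0 Q Q = Some (u, v) -> exists s, u = s ^+ 2.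
Proof.
case: Q => [[x y] /= /eqP on_Q|//]; rewrite eqxx.
case: ifPn => // /negPf y2_neq0 [<- _].
have : 2%:R * y != 0 by rewrite mulr_natl mulr2n y2_neq0.
rewrite mulf_eq0 negb_or => /andP[two_neq0 y_neq0].
exists ((x ^+ 2 - a) / (2%:R * y)); apply/eqP; rewrite -subr_eq0.
have -> : ((3%:R * x ^+ 2 + a) / (2%:R * y)) ^+ 2 - x - x - ((x ^+ 2 - a) / (2%:R * y)) ^+ 2
    = 2%:R * x * (x ^+ 3 + a * x + 0 - y ^+ 2) / y ^+ 2.
  by field; rewrite two_neq0 y_neq0.
by rewrite on_Q subrr mulr0 mul0r.
Qed.

Theorem proposition1 (p : nat) (hp : prime p) (hp4 : (p %% 4 = 3)%N) (t : 'F_p) :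
  let a : 'F_p := - (t ^+ 2 + 1) in
  [/\ is_elliptic a 0,
      supersingular_Fp a 0,
      on_curve a 0 (Some (-1, t)) &
      ~ exists Q : option ('F_p * 'F_p),
          on_curve a 0 Q /\ ec_add a 0 Q Q = Some (-1, t)].
Proof.
move=> a.
have cardF : #|'F_p| = p by rewrite card_Fp.
have sqr_neqN1 (s : 'F_p) : s ^+ 2 != -1 by apply: sqrf_neqN1; rewrite cardF.
have a_neq0 : a != 0 by rewrite oppr_eq0 addr_eq0 sqr_neqN1.
have two_neq0 : 2%:R != 0 :> 'F_p by apply: finField_two_neq0; rewrite cardF -(@odd_mod p 4) ?hp4.
split.
- by rewrite /is_elliptic expr0n mulr0 addr0 -[4%N]/(2 ^ 2)%N natrX !mulf_neq0 ?expf_neq0.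
- rewrite /supersingular_Fp /npoints card_on_curve (sum_card_sqrts_odd sqr_neqN1); last first.
    by move=> x; ring.
  by rewrite card_Fp // -addn1 PoszD subrr dvdz0.
- by rewrite /= /a; apply/eqP; ring.
- move=> [Q [on_Q /(ec_double_x_sqr on_Q) [s]]].
  by apply/eqP; rewrite eq_sym sqr_neqN1.
Qed.
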